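(* Let $\lambda$ be a normalized additively alternating $n\times n$ complex matrix of rank $n-1$ with biresidue matrix $b$. Then a relevant weight $\mathbf w\in\mathbb{Z}^n$ is $\lambda$-Poisson-contributing if and only if $\mathbf w$ is a (complex) linear combination of the rows $b_{i\bullet}$ for those $i$ with $w_i=-1$. If, in addition, $\lambda$ is generic, this is equivalent to $\mathbf w$ being $q$-Hochschild-contributing for $q=\operatorname{EExp}(\lambda)$.
   Context: Additively alternating: $\lambda_{ij}=-\lambda_{ji}$; normalized: every row sums to $0$. The biresidue matrix of such $\lambda$ of rank $n-1$ is the unique normalized alternating matrix $b$ with $b|_\Delta=(\lambda|_\Delta)^{-1}$, where $\Delta=\{z\in\mathbb{C}^n:\sum_iz_i=0\}$ (which $\lambda$ maps to itself). $\operatorname{EExp}(\lambda)=(e^{\lambda_{ij}})$. A weight $\mathbf w$ is relevant if $w_i\ge-1$ for all $i$ and $\sum w_i=0$; $\lambda$-Poisson-contributing if $w_i\ge-1$ for all $i$ and $\sum_j\lambda_{ij}w_j=0$ for every $i$ with $w_i\ge0$; $q$-Hochschild-contributing if $w_i\ge-1$ for all $i$ and $\prod_jq_{ij}^{w_j}=1$ for every $i$ with $w_i\ge0$. $\lambda$ is generic if it has rank $n-1$ and every relevant $\operatorname{EExp}(\lambda)$-Hochschild-contributing weight is $\lambda$-Poisson-contributing. *)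

From mathcomp Require Import all_boot all_order all_algebra.
From mathcomp Require Import reals sequences exp trigo.
From mathcomp Require Export complex.
Set Implicit Arguments. Unset Strict Implicit. Unset Printing Implicit Defensive.
Import Order.TTheory GRing.Theory Num.Theory.
Local Open Scope ring_scope.

Section Defs.
Variable R : realType.
Local Notation C := (R[i]).
Variable n : nat.

Definition add_alternating (l : 'M[C]_n) : Prop :=
  forall i j, l i j = - l j i.

Definition normalized (l : 'M[C]_n) : Prop :=
  forall i, \sum_j l i j = 0.

Definition inDelta (z : 'cV[C]_n) : Prop := \sum_i z i 0 = 0.

Definition is_biresidue (l b : 'M[C]_n) : Prop :=
  [/\ add_alternating b, normalized b,
      (forall z, inDelta z -> b *m (l *m z) = z) &
      (forall z, inDelta z -> l *m (b *m z) = z)].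

Definition cexp (z : C) : C :=
  let: Complex x y := z in Complex (expR x * cos y) (expR x * sin y).

Definition EExp (l : 'M[C]_n) : 'M[C]_n := \matrix_(i, j) cexp (l i j).

Definition relevant (w : 'I_n -> int) : Prop :=
  (forall i, -1 <= w i) /\ \sum_i w i = 0.

Definition poisson_contributing (l : 'M[C]_n) (w : 'I_n -> int) : Prop :=
  (forall i, -1 <= w i) /\
  (forall i, 0 <= w i -> \sum_j l i j * (w j)%:~R = 0).

Definition hochschild_contributing (q : 'M[C]_n) (w : 'I_n -> int) : Prop :=
  (forall i, -1 <= w i) /\
  (forall i, 0 <= w i -> \prod_j (q i j) ^ (w j) = 1).

Definition generic (l : 'M[C]_n) : Prop :=
  \rank l = n.-1 /\
  (forall w, relevant w -> hochschild_contributing (EExp l) w ->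
             poisson_contributing l w).

Definition in_span_rows_minus1 (b : 'M[C]_n) (w : 'I_n -> int) : Prop :=
  exists c : 'I_n -> C,
    forall k, (w k)%:~R = \sum_(i | w i == -1) c i * b i k.

End Defs.

(** Write [W] for the column vector of [w] and [P] for the set of indices with
   [w_i = -1].  Since [W] lies in [Delta], [W = b (l W)]; for a relevant [w]
   the Poisson condition says exactly that [l W] is supported on [P], which
   makes [W] a combination of the columns (up to sign, rows) of [b] indexed by
   [P].  Conversely, if [W = b c] with [c] supported on [P], then
   [-sum_i c_i = c^T W = c^T b c = 0] because [b] is alternating, so [c] lies
   in [Delta] and [l W = l b c = c] is supported on [P].  The Hochschild
   condition is the image of the Poisson condition under the exponential,
   which turns sums into products; genericity provides the converse. *)

From mathcomp Require Import all_boot all_order all_algebra.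
From mathcomp Require Import reals exp trigo.
From mathcomp Require Import ring zify.
Import Order.TTheory GRing.Theory Num.Theory.
Local Open Scope ring_scope.

Section ComplexExponential.
Variable R : realType.

Lemma cexpD (a b : R[i]) : cexp (a + b) = cexp a * cexp b.
Proof.
case: a => x1 y1; case: b => x2 y2 /=.
by rewrite expRD cosD sinD; congr Complex; ring.
Qed.

Lemma cexp0 : cexp (0 : R[i]) = 1.
Proof. by rewrite /= expR0 cos0 sin0 !mul1r. Qed.

Lemma cexpMn (z : R[i]) (m : nat) : cexp z ^+ m = cexp (m%:R * z).
Proof.
elim: m => [|m IH]; first by rewrite expr0 mul0r cexp0.
by rewrite exprS IH -cexpD mulrS mulrDl mul1r.
Qed.

Lemma cexpN (z : R[i]) : cexp (- z) = (cexp z)^-1.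
Proof.
have cexp_neq0 : cexp z != 0.
  apply/eqP => cexpz0; have := cexpD (- z) z.
  by rewrite addNr cexp0 cexpz0 mulr0 => /eqP; rewrite oner_eq0.
by apply/(mulIf cexp_neq0); rewrite mulVf // -cexpD addNr cexp0.
Qed.

Lemma cexpz (z : R[i]) (k : int) : cexp z ^ k = cexp (k%:~R * z).
Proof.
case: k => m; first by rewrite -exprnP cexpMn.
by rewrite NegzE -invr_expz -exprnP cexpMn -cexpN rmorphN mulNr.
Qed.

Lemma cexp_sum (I : Type) (r : seq I) (P : pred I) (F : I -> R[i]) :
  cexp (\sum_(i <- r | P i) F i) = \prod_(i <- r | P i) cexp (F i).
Proof. exact: (big_morph _ cexpD cexp0). Qed.

End ComplexExponential.

Lemma poisson_hochschild_contributing (R : realType) (n : nat)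
    (l : 'M[R[i]]_n) (w : 'I_n -> int) :
  poisson_contributing l w -> hochschild_contributing (EExp l) w.
Proof.
move=> [w_ge poisson]; split=> // i /poisson row_eq0.
under eq_bigr do rewrite mxE cexpz mulrC.
by rewrite -cexp_sum row_eq0 cexp0.
Qed.

Lemma alternating_form_eq0 (F : numDomainType) (n : nat) (b : 'M[F]_n)
    (x : 'cV[F]_n) :
  b^T = - b -> x^T *m b *m x = 0.
Proof.
move=> bT; set s := x^T *m b *m x.
have sT : s^T = - s by rewrite /s !trmx_mul trmxK bT mulNmx mulmxN mulmxA.
have sN : s = - s by rewrite -sT [s]mx11_scalar tr_scalar_mx.
apply/matrixP => i j; move/matrixP/(_ i j)/eqP: sN.
by rewrite !mxE -subr_eq0 opprK -mulr2n mulrn_eq0 => /eqP.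
Qed.

Section BiresidueKernel.
Variables (F : numDomainType) (n : nat) (l b : 'M[F]_n) (P : pred 'I_n).
Hypothesis b_alt : b^T = - b.
Hypothesis b_l : forall z : 'cV_n, \sum_i z i 0 = 0 -> b *m (l *m z) = z.
Hypothesis l_b : forall z : 'cV_n, \sum_i z i 0 = 0 -> l *m (b *m z) = z.

Lemma biresidue_kernelP (W : 'cV[F]_n) :
  \sum_i W i 0 = 0 -> (forall i, P i -> W i 0 = -1) ->
  (forall i, ~~ P i -> (l *m W) i 0 = 0) <->
  exists2 c : 'cV_n, (forall i, ~~ P i -> c i 0 = 0) & W = b *m c.
Proof.
move=> W_sum W_P; split=> [lW_supp | [c c_supp W_bc]].
  by exists (l *m W); rewrite ?b_l.
have cW : \sum_i c i 0 = - (c^T *m W) 0 0.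
  rewrite mxE -sumrN; apply: eq_bigr => i _; rewrite mxE.
  have [/W_P -> | /c_supp ->] := boolP (P i); first by rewrite mulrN1 opprK.
  by rewrite mul0r oppr0.
have c_sum : \sum_i c i 0 = 0.
  by rewrite cW W_bc mulmxA alternating_form_eq0 // mxE oppr0.
by move=> i /c_supp <-; rewrite W_bc l_b.
Qed.

End BiresidueKernel.

Definition weight_col (F : pzRingType) {n : nat} (w : 'I_n -> int) :
  'cV[F]_n := \col_k (w k)%:~R.

Section Weights.
Variables (R : realType) (n : nat) (w : 'I_n -> int).
Local Notation W := (weight_col (R[i]) w).

Lemma relevant_weight_col_sum : relevant w -> \sum_i W i 0 = 0.
Proof.
by move=> [_ w_sum]; under eq_bigr do rewrite mxE; rewrite -rmorph_sum w_sum.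
Qed.

Lemma poisson_contributingE (l : 'M[R[i]]_n) :
  (forall i, -1 <= w i) ->
  poisson_contributing l w <-> (forall i, w i != -1 -> (l *m W) i 0 = 0).
Proof.
have lWE i : (l *m W) i 0 = \sum_j l i j * (w j)%:~R.
  by rewrite mxE; apply: eq_bigr => j _; rewrite mxE.
move=> w_ge; split=> [[_ poisson] i wi | lW_supp].
  by rewrite lWE poisson //; have := w_ge i; move: wi => /eqP; lia.
split=> // i wi; rewrite -lWE lW_supp //; apply/eqP; lia.
Qed.

Lemma in_span_rows_minus1E (b : 'M[R[i]]_n) :
  add_alternating b ->
  in_span_rows_minus1 b w <->
  exists2 c : 'cV_n, (forall i, w i != -1 -> c i 0 = 0) & W = b *m c.
Proof.
move=> b_alt.
have bcE (c : 'cV_n) k : (forall i, w i != -1 -> c i 0 = 0) ->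
    (b *m c) k 0 = \sum_(i | w i == -1) - c i 0 * b i k.
  move=> c_supp; rewrite mxE (bigID (fun i => w i == -1)) /=.
  rewrite [X in _ + X]big1 ?addr0 => [|i /c_supp ->]; last by rewrite mulr0.
  by apply: eq_bigr => i _; rewrite b_alt !mulNr mulrC.
split=> [[c c_span] | [c c_supp W_bc]].
  pose c' : 'cV_n := \col_i (if w i == -1 then - c i else 0).
  have c'_supp i : w i != -1 -> c' i 0 = 0 by rewrite mxE => /negbTE ->.
  exists c' => //; apply/matrixP => k j; rewrite ord1 bcE // mxE c_span.
  by apply: eq_bigr => i wi; rewrite mxE wi opprK.
exists (fun i => - c i 0) => k.
by move/matrixP/(_ k 0): W_bc; rewrite bcE // mxE.
Qed.

End Weights.

Theorem proposition4p9 (R : realType) (n : nat) (l b : 'M[R[i]]_n) :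
  add_alternating l -> normalized l -> \rank l = n.-1 ->
  is_biresidue l b ->
  forall w : 'I_n -> int, relevant w ->
    (poisson_contributing l w <-> in_span_rows_minus1 b w) /\
    (generic l -> (poisson_contributing l w <->
                   hochschild_contributing (EExp l) w)).
Proof.
(* The biresidue identities on [Delta] are all that is needed about [l]. *)
move=> _ _ _ [b_alt _ b_l l_b] w w_rel.
have bT : b^T = - b by apply/matrixP => i j; rewrite !mxE b_alt.
split.
  rewrite poisson_contributingE; last by case: w_rel.
  rewrite in_span_rows_minus1E //.
  apply: (@biresidue_kernelP _ _ l b (fun i => w i == -1) bT b_l l_b).
  - exact: relevant_weight_col_sum.
  - by move=> i /eqP wi; rewrite mxE wi.
move=> [_ generic_l]; split; first exact: poisson_hochschild_contributing.
exact: generic_l.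
Qed.
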